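(* Consider any private information delivery scheme (with $K$ messages, $N$ servers, $M$ messages per server, message length $L$) and any $k\in\{1,\dots,K\}$. Let $\mathcal{N}_k\subseteq\{1,\dots,N\}$ be the set of servers storing $W_k$, i.e. $W_k\in S_j$ for all $j\in\mathcal{N}_k$ and $W_k\notin S_l$ for all $l\notin\mathcal{N}_k$. Then $$\sum_{n\in\mathcal{N}_k} D_n \ge L.$$
   Context: A PID scheme: There are $K$ independent messages $W_1,\dots,W_K$, each consisting of $L$ i.i.d. uniform symbols from a finite field $\mathbb{F}_p$, so that (in $p$-ary units) $H(W_k)=L$ for all $k$ and $H(W_1,\dots,W_K)=\sum_k H(W_k)$. There are $N$ servers; server $n$ stores $S_n=\{W_k : k\in\mathcal{S}_n\}$ for some $\mathcal{S}_n\subset\{1,\dots,K\}$ with $|\mathcal{S}_n|=M$. The servers share a common random variable $Z$ with $H(Z,W_1,\dots,W_K)=H(Z)+\sum_kH(W_k)$. For each $k$, server $n$ sends an answer $A_n^{[k]}$ that is a deterministic function of $(S_n,Z)$ and consists of $D_n$ symbols of $\mathbb{F}_p$ ($D_n$ independent of $k$). Correctness: $H(W_k\mid A_1^{[k]},\dots,A_N^{[k]})=0$ for all $k$. Privacy: for all $k$, $(A_1^{[1]},\dots,A_N^{[1]},W_1)$ and $(A_1^{[k]},\dots,A_N^{[k]},W_k)$ are identically distributed. *)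

From HB Require Import structures.
From mathcomp Require Import all_boot all_order all_algebra.
From mathcomp Require Import reals exp.
Set Implicit Arguments. Unset Strict Implicit. Unset Printing Implicit Defensive.
Import Order.TTheory GRing.Theory Num.Theory.
Local Open Scope ring_scope.

Definition msgs (p K L : nat) := {ffun 'I_K -> 'rV['F_p]_L}.

(* Sample space: (W_1..W_K, Z).  The messages are uniform on msgs (i.e. all
   K*L symbols are i.i.d. uniform on F_p) and independent of Z, whose law is PZ. *)
Definition omega (p K L : nat) (Zt : finType) := (msgs p K L * Zt)%type.

Section Prob.
Variables (R : realType) (p K L : nat) (Zt : finType) (PZ : {ffun Zt -> R}).

Definition Pr (om : omega p K L Zt) : R := PZ om.2 / #|{: msgs p K L}|%:R.

Definition pmf (T : finType) (X : omega p K L Zt -> T) (x : T) : R :=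
  \sum_(om | X om == x) Pr om.

(* entropy in p-ary units, with 0 log 0 = 0 *)
Definition entropy (T : finType) (X : omega p K L Zt -> T) : R :=
  - \sum_(x : T) (if pmf X x == 0 then 0
                  else pmf X x * (ln (pmf X x) / ln p%:R)).

Definition condEntropy (T U : finType) (X : omega p K L Zt -> T)
  (Y : omega p K L Zt -> U) : R :=
  entropy (fun om => (X om, Y om)) - entropy Y.
End Prob.

Definition answers (p K L N : nat) (Zt : finType) (D : 'I_N -> nat)
  (A : forall (k : 'I_K) (n : 'I_N), msgs p K L -> Zt -> 'rV['F_p]_(D n))
  (k : 'I_K) (om : omega p K L Zt) : {dffun forall n : 'I_N, 'rV['F_p]_(D n)} :=
  [ffun n => A k n om.1 om.2].

Definition is_PID_scheme (R : realType) (p K N M L : nat) (Zt : finType)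
  (PZ : {ffun Zt -> R}) (Sset : 'I_N -> {set 'I_K}) (D : 'I_N -> nat)
  (A : forall (k : 'I_K) (n : 'I_N), msgs p K L -> Zt -> 'rV['F_p]_(D n)) : Prop :=
  [/\ prime p,
      (forall z, 0 <= PZ z) /\ \sum_z PZ z = 1,
      (forall n, #|Sset n| = M) /\
      (* A_n^[k] is a deterministic function of (S_n, Z) *)
      (forall k n (w w' : msgs p K L) z,
          (forall j, j \in Sset n -> w j = w' j) -> A k n w z = A k n w' z),
      (forall k, condEntropy PZ (fun om : omega p K L Zt => om.1 k)
                   (answers A k) = 0) &
      (forall k k', pmf PZ (fun om : omega p K L Zt => (answers A k om, om.1 k))
                  = pmf PZ (fun om : omega p K L Zt => (answers A k' om, om.1 k')))].

From HB Require Import structures.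
From mathcomp Require Import all_boot all_order all_algebra.
From mathcomp Require Import reals exp.
From mathcomp Require Import lra.
Set Implicit Arguments. Unset Strict Implicit. Unset Printing Implicit Defensive.
Import Order.TTheory GRing.Theory Num.Theory.
Local Open Scope ring_scope.

(* Zero conditional entropy forces W_k to be a function of the answers on the
   support of the joint law.  Fix z with P(Z = z) > 0 and let only W_k vary,
   the other messages being 0: the answers of servers not storing W_k are then
   constant, so v |-> (A_n^[k])_{n in N_k} is injective on F_p^L.  Counting,
   p^L <= p^(sum_{n in N_k} D_n). *)

Section ConditionalEntropy.
Variables (R : realType) (p K L : nat) (Zt : finType) (PZ : {ffun Zt -> R}).
Hypothesis PZ_ge0 : forall z, 0 <= PZ z.

Let Omega := omega p K L Zt.

Lemma Pr_ge0 (om : Omega) : 0 <= Pr PZ om.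
Proof. by rewrite /Pr divr_ge0. Qed.

Lemma pmf_ge0 (T : finType) (X : Omega -> T) x : 0 <= pmf PZ X x.
Proof. by apply: sumr_ge0 => om _; apply: Pr_ge0. Qed.

Lemma Pr_le_pmf (T : finType) (X : Omega -> T) om : Pr PZ om <= pmf PZ X (X om).
Proof. by rewrite /pmf (bigD1 om) //= lerDl sumr_ge0 // => o _; apply: Pr_ge0. Qed.

Variables (T U : finType) (X : Omega -> T) (Y : Omega -> U).

Let PXY := pmf PZ (fun om => (X om, Y om)).
Let PY := pmf PZ Y.

Lemma pmf_marginal y : PY y = \sum_x PXY (x, y).
Proof.
rewrite /PY /PXY /pmf (partition_big X xpredT) //=.
by apply: eq_bigr => x _; apply: eq_bigl => om; rewrite xpair_eqE andbC.
Qed.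

Lemma pmf_pair_le_marginal x y : PXY (x, y) <= PY y.
Proof.
by rewrite pmf_marginal (bigD1 x) //= lerDl sumr_ge0 // => i _; apply: pmf_ge0.
Qed.

Lemma condEntropyE :
  condEntropy PZ X Y =
  \sum_y \sum_x PXY (x, y) * ((ln (PY y) - ln (PXY (x, y))) / ln p%:R).
Proof.
have entropyE (V : finType) (W : Omega -> V) :
    entropy PZ W = - \sum_v pmf PZ W v * (ln (pmf PZ W v) / ln p%:R).
  congr (- _); apply: eq_bigr => v _.
  by case: eqP => // ->; rewrite mul0r.
rewrite /condEntropy !entropyE -/PXY -/PY opprK addrC.
have -> : \sum_(xy : T * U) PXY xy * (ln (PXY xy) / ln p%:R) =
          \sum_y \sum_x PXY (x, y) * (ln (PXY (x, y)) / ln p%:R).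
  by rewrite exchange_big pair_big; apply: eq_bigr => -[].
rewrite -sumrB.
apply: eq_bigr => y _; rewrite pmf_marginal big_distrl -sumrB.
by apply: eq_bigr => x _; rewrite -mulrBr -mulrBl.
Qed.

Hypothesis p_gt1 : (1 < p)%N.

Lemma condEntropy_term_ge0 x y :
  0 <= PXY (x, y) * ((ln (PY y) - ln (PXY (x, y))) / ln p%:R).
Proof.
have [->|nz] := eqVneq (PXY (x, y)) 0; first by rewrite mul0r.
have PXY_gt0 : 0 < PXY (x, y) by rewrite lt0r nz pmf_ge0.
have PY_gt0 : 0 < PY y := lt_le_trans PXY_gt0 (pmf_pair_le_marginal x y).
rewrite mulr_ge0 ?divr_ge0 ?ln_ge0 ?ler1n 1?ltnW ?(ltW PXY_gt0) //.
by rewrite subr_ge0 ler_ln ?posrE ?pmf_pair_le_marginal.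
Qed.

Lemma condEntropy_eq0_pmf_pair x y :
  condEntropy PZ X Y = 0 -> 0 < PXY (x, y) -> PXY (x, y) = PY y.
Proof.
rewrite condEntropyE => HXY0 PXY_gt0.
have term0 := psumr_eq0P (fun x _ => condEntropy_term_ge0 x y)
  (psumr_eq0P (fun y _ => sumr_ge0 _ (fun x _ => condEntropy_term_ge0 x y))
     HXY0 isT) isT.
have ln_p_gt0 : 0 < ln (p%:R : R) by rewrite ln_gt0 // ltr1n.
move/eqP: (term0 x); rewrite mulf_eq0 (gt_eqF PXY_gt0) mulf_eq0 invr_eq0.
rewrite (gt_eqF ln_p_gt0) orbF subr_eq0 => /eqP ln_eq.
have PY_gt0 : 0 < PY y := lt_le_trans PXY_gt0 (pmf_pair_le_marginal x y).
by apply/esym/(ln_inj _ _ ln_eq); rewrite posrE.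
Qed.

Lemma condEntropy_eq0_functional om1 om2 :
  condEntropy PZ X Y = 0 -> 0 < Pr PZ om1 -> 0 < Pr PZ om2 ->
  Y om1 = Y om2 -> X om1 = X om2.
Proof.
move=> HXY0 Pr1 Pr2 eqY; apply/eqP; apply: contraT => neqX.
have PXY1_gt0 : 0 < PXY (X om1, Y om1) := lt_le_trans Pr1 (Pr_le_pmf _ om1).
have PXY2_gt0 : 0 < PXY (X om2, Y om1).
  by rewrite eqY (lt_le_trans Pr2 (Pr_le_pmf _ om2)).
(* PY (Y om1) would exceed PXY (X om1, Y om1) by at least PXY (X om2, Y om1). *)
have := condEntropy_eq0_pmf_pair HXY0 PXY1_gt0.
rewrite pmf_marginal (bigD1 (X om1)) //= (bigD1 (X om2)) /=; last by rewrite eq_sym.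
have : 0 <= \sum_(x | (x != X om1) && (x != X om2)) PXY (x, Y om1).
  by apply: sumr_ge0 => x _; apply: pmf_ge0.
lra.
Qed.

End ConditionalEntropy.

Lemma leq_card_prod_free_coords (S I : finType) (T_ : I -> finType) (P : pred I)
    (f : S -> {dffun forall i, T_ i}) :
  injective f -> (forall i, ~~ P i -> forall s s', f s i = f s' i) ->
  (#|S| <= \prod_(i | P i) #|T_ i|)%N.
Proof.
move=> f_inj f_const; case: (pickP S) => [s0 _ | S0]; last by rewrite eq_card0.
pose F i : pred (T_ i) := if P i then predT else pred1 (f s0 i).
have f_fam s : f s \in family F.
  apply/familyP => i; rewrite /F; case: ifPn => // nPi.
  by rewrite inE (f_const i nPi s s0).
have card_F i : #|F i| = if P i then #|T_ i| else 1%N.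
  by rewrite /F; case: ifP => _; [apply: eq_card | rewrite card1].
have im_f_sub : codom f \subset family F by apply/subsetP => _ /codomP [s ->].
rewrite -(card_codom f_inj) big_mkcond (leq_trans (subset_leq_card im_f_sub)) //.
rewrite card_family foldrE big_map big_enum /=.
by rewrite (eq_bigr _ (fun i _ => card_F i)).
Qed.

Theorem lemma1 (R : realType) (p K N M L : nat) (Zt : finType)
  (PZ : {ffun Zt -> R}) (Sset : 'I_N -> {set 'I_K}) (D : 'I_N -> nat)
  (A : forall (k : 'I_K) (n : 'I_N), msgs p K L -> Zt -> 'rV['F_p]_(D n)) :
  @is_PID_scheme R p K N M L Zt PZ Sset D A ->
  forall k : 'I_K, (L <= \sum_(n : 'I_N | k \in Sset n) D n)%N.
Proof.
move=> [p_prime [PZ_ge0 PZ_sum1] [_ A_local] correct _] k.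
have p_gt1 := prime_gt1 p_prime.
have [z /andP [_ PZ_gt0]] : exists z, true && (0 < PZ z).
  by apply: psumr_neq0P => [z _|]; rewrite ?PZ_sum1 //; apply/eqP/oner_neq0.
pose w (v : 'rV['F_p]_L) : msgs p K L := [ffun j => if j == k then v else 0].
have Pr_gt0 v : 0 < Pr PZ (w v, z).
  by rewrite /Pr divr_gt0 // ltr0n; apply/card_gt0P; exists (w 0).
have answers_inj : injective (fun v => answers A k (w v, z)).
  move=> v1 v2 /(condEntropy_eq0_functional PZ_ge0 p_gt1 (correct k)).
  by move=> /(_ (Pr_gt0 v1) (Pr_gt0 v2)); rewrite /= !ffunE eqxx.
have := leq_card_prod_free_coords (P := fun n => k \in Sset n) answers_inj.
rewrite card_mx (card_Fp p_prime) mul1n.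
under eq_bigr => n _ do rewrite card_mx (card_Fp p_prime) mul1n.
rewrite -expn_sum (leq_exp2l _ _ p_gt1); apply=> n kNn v v'.
rewrite !ffunE; apply: A_local => j jn /=; rewrite !ffunE.
by case: eqP => // ejk; rewrite -ejk jn in kNn.
Qed.
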